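(* Let $d\ge 0$ and let $G$ be a $d$-manifold with $w(G)=1+(-1)^d$. Then $G$ is Dehn-Sommerville.
   Context: A finite abstract simplicial complex is a finite set of non-empty finite sets closed under taking non-empty subsets. For $x\in G$, $w(x)=(-1)^{|x|-1}$ and $w(A)=\sum_{x\in A}w(x)$. For $x\in G$: $U(x)=\{y\in G: x\subset y\}$, $B(x)=\{y\in G : y\subset z \text{ for some } z\in U(x)\}$, $S(x)=B(x)\setminus U(x)$. A one-point complex $\{\{v\}\}$ is contractible, and $G$ is contractible if there is $x\in G$ with $S(x)$ and $G\setminus U(x)$ both contractible. The empty complex is the $(-1)$-sphere; for $k\ge 0$, $G$ is a $k$-manifold if every unit sphere $S(x)$, $x\in G$, is a $(k-1)$-sphere, and a $k$-sphere if it is a $k$-manifold and $G\setminus U(x)$ is contractible for some $x\in G$. For a complex $G$ of maximal dimension $d=\max_{x\in G}(|x|-1)$, $f_k(G)$ is the number of elements of cardinality $k+1$, $f_G(t)=1+\sum_{k=0}^d f_k(G)t^{k+1}$, and $h_G(x)=(x-1)^{d+1}f_G(1/(x-1))=h_0+h_1x+\cdots+h_{d+1}x^{d+1}$; $G$ is Dehn-Sommerville if $h_i=h_{d+1-i}$ for all $i=0,\dots,d+1$. *)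

From mathcomp Require Import all_boot all_order all_algebra.
Set Implicit Arguments. Unset Strict Implicit. Unset Printing Implicit Defensive.
Import GRing.Theory Num.Theory.
Local Open Scope ring_scope.

Section Complexes.
Variable T : finType.
Implicit Types (G : {set {set T}}) (x : {set T}).

Definition is_complex G : Prop :=
  set0 \notin G /\
  (forall x y : {set T}, x \in G -> y \subset x -> y != set0 -> y \in G).

Definition wt x : int := (-1) ^+ (#|x|.-1).
Definition wG G : int := \sum_(x in G) wt x.

Definition Ustar G x : {set {set T}} := [set y in G | x \subset y].
Definition Bstar G x : {set {set T}} :=
  [set y in G | [exists z in Ustar G x, y \subset z]].
Definition Sph G x : {set {set T}} := Bstar G x :\: Ustar G x.

Inductive contractible : {set {set T}} -> Prop :=
| contr_point (v : T) : contractible [set [set v]]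
| contr_step G x : x \in G -> contractible (Sph G x) ->
    contractible (G :\: Ustar G x) -> contractible G.

(* sphere_ n G  <->  G is an (n-1)-sphere *)
Fixpoint sphere_ (n : nat) G : Prop :=
  match n with
  | 0 => G = set0
  | n'.+1 => (forall x, x \in G -> sphere_ n' (Sph G x)) /\
             (exists2 x, x \in G & contractible (G :\: Ustar G x))
  end.

Definition manifold (k : nat) G : Prop :=
  forall x, x \in G -> sphere_ k (Sph G x).

(* D = d+1 = max cardinality of a face (0 for the empty complex, i.e. d = -1) *)
Definition dimS G : nat := \max_(x in G) #|x|.

(* f_{k-1}: number of faces of cardinality k, with f_{-1} = 1 *)
Definition fcount G (k : nat) : nat :=
  if k == 0%N then 1%N else #|[set x in G | #|x| == k]|.

(* h_G(x) = (x-1)^(d+1) f_G(1/(x-1)), f_G(t) = sum_k f_{k-1} t^k, expanded *)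
Definition hpoly G : {poly int} :=
  \sum_(k < (dimS G).+1) (fcount G k)%:R *: ('X - 1) ^+ (dimS G - k).

Definition dehn_sommerville G : Prop :=
  forall i : nat, (i <= dimS G)%N -> (hpoly G)`_i = (hpoly G)`_(dimS G - i).

End Complexes.

From mathcomp Require Import all_boot all_order all_algebra.
From mathcomp Require Import ring.
Set Implicit Arguments. Unset Strict Implicit. Unset Printing Implicit Defensive.
Import GRing.Theory Num.Theory.
Local Open Scope ring_scope.

(* The Euler characteristic w is additive and equals 1 on cones; the star
   B(x) of a face x is a cone over any vertex of x, so w(U(x)) = 1 - w(S(x)),
   contractible complexes have w = 1 and (n-1)-spheres have w = 1 - (-1)^n.
   The derivative of the f-polynomial f_G(t) = 1 + sum_(x in G) t^|x| is the
   sum of the f-polynomials of the vertex links S(v).  By induction on d, for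
   a d-manifold with w(G) = 1 + (-1)^d the polynomial
   f_G(-1-t) - (-1)^(d+1) f_G(t) has zero derivative (the links satisfy the
   identity one dimension lower) and vanishes at t = 0 (that is the hypothesis
   on w(G)).  In the homogeneous form F(a, b) = b^D f_G(a/b) this functional
   equation reads F(-(a+b), b) = (-1)^(d+1) F(a, b); since h_G(x) = F(1, x-1)
   and x^D h_G(1/x) = F(x, 1-x), it makes h_G palindromic. *)

Definition hpoly_of (R : nzRingType) (D : nat) (p : {poly R}) : {poly R} :=
  \sum_(k < D.+1) p`_k *: ('X - 1) ^+ (D - k).

Section Homogenization.
Variable R : comNzRingType.
Implicit Types (p : {poly R}) (a b c x : R).

Definition homog D p a b : R := \sum_(k < D.+1) p`_k * a ^+ k * b ^+ (D - k).

Lemma homogZ D p a b c : homog D p (c * a) (c * b) = c ^+ D * homog D p a b.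
Proof.
rewrite /homog mulr_sumr; apply: eq_bigr => k _.
have -> : c ^+ D = c ^+ k * c ^+ (D - k) by rewrite -exprD subnKC // -ltnS.
rewrite !exprMn.
move: p`_k (a ^+ k) (b ^+ (D - k)) (c ^+ k) (c ^+ (D - k)) => q u v w z.
by ring.
Qed.

Lemma homog1 D p a : (size p <= D.+1)%N -> homog D p a 1 = p.[a].
Proof.
move=> sp; rewrite (horner_coef_wide _ sp); apply: eq_bigr => k _.
by rewrite expr1n mulr1.
Qed.

Lemma homogr0 D p a : homog D p a 0 = p`_D * a ^+ D.
Proof.
rewrite /homog big_ord_recr /= subnn expr0 mulr1 big1 ?add0r // => k _.
by rewrite expr0n subn_eq0 leqNgt ltn_ord mulr0.
Qed.

Lemma horner_hpoly_of D p x : (hpoly_of D p).[x] = homog D p 1 (x - 1).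
Proof.
rewrite horner_sum; apply: eq_bigr => k _.
by rewrite hornerZ horner_exp hornerD hornerN hornerX hornerC expr1n mulr1.
Qed.

Lemma size_hpoly_of D p : (size (hpoly_of D p) <= D.+1)%N.
Proof.
apply: leq_trans (size_sum _ _ _) _; apply/bigmax_leqP => k _.
apply: leq_trans (size_scale_leq _ _) _.
by rewrite -polyC1 size_exp_XsubC ltnS leq_subr.
Qed.

Lemma horner_rev_poly D p x : (\poly_(i < D.+1) p`_(D - i)).[x] = homog D p 1 x.
Proof.
rewrite horner_poly /homog (reindex_inj rev_ord_inj) /=; apply: eq_bigr => k _.
by rewrite subSS subKn ?expr1n ?mulr1 // -ltnS.
Qed.

End Homogenization.

Section HomogenizationField.
Variable F : fieldType.
Implicit Types (p : {poly F}) (a b s : F).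

Lemma homog_horner D p a b : (size p <= D.+1)%N -> b != 0 ->
  homog D p a b = b ^+ D * p.[a / b].
Proof. by move=> sp b0; rewrite -(homog1 (a / b) sp) -homogZ mulr1 mulrC divfK. Qed.

Lemma homog_reflect D p s a b : (size p <= D.+1)%N -> p \Po -('X + 1) = s *: p ->
  b != 0 -> homog D p (- (a + b)) b = s * homog D p a b.
Proof.
move=> sp pR b0; rewrite !homog_horner //.
have := congr1 (horner^~ (a / b)) pR.
rewrite /= horner_comp hornerZ hornerN hornerD hornerX hornerC => pR_ab.
by rewrite mulNr mulrDl divff // pR_ab mulrCA.
Qed.

End HomogenizationField.

Lemma eq_poly_except01 (R : numDomainType) (p q : {poly R}) :
  (forall x, x != 0 -> x != 1 -> p.[x] = q.[x]) -> p = q.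
Proof.
move=> pq; apply/eqP; rewrite -subr_eq0; apply/eqP.
apply: (@roots_geq_poly_eq0 _ _ [seq i.+2%:R | i <- iota 0 (size (p - q))]).
- apply/allP => _ /mapP[i _ ->].
  by rewrite /root hornerD hornerN pq ?subrr ?pnatr_eq0 ?pnatr_eq1.
- by rewrite map_inj_uniq ?iota_uniq // => i j /eqP; rewrite eqr_nat => /eqP[].
- by rewrite size_map size_iota.
Qed.

Lemma deriv_eq0_polyC (R : numDomainType) (p : {poly R}) : p^`() = 0 -> p = (p`_0)%:P.
Proof.
move=> dp; apply/polyP => -[|i]; rewrite coefC //=.
have /eqP := congr1 (fun q : {poly R} => q`_i) dp.
by rewrite coef_deriv coef0 mulrn_eq0 => /eqP.
Qed.

Lemma hpoly_of_palindromic (F : numFieldType) (p : {poly F}) D s :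
  size p = D.+1 -> p \Po -('X + 1) = s *: p ->
  forall i, (i <= D)%N -> (hpoly_of D p)`_i = (hpoly_of D p)`_(D - i).
Proof.
move=> sp pR; set h := hpoly_of D p; set r := \poly_(i < D.+1) h`_(D - i).
have sp' : (size p <= D.+1)%N by rewrite sp.
have rE x : x != 0 -> r.[x] = homog D p x (1 - x).
  move=> x0; rewrite horner_rev_poly homog_horner ?size_hpoly_of // horner_hpoly_of.
  by rewrite -homogZ mulr1 mulrBr mulr1 div1r mulfV.
have sr : (-1) ^+ D *: r = s *: h.
  apply: eq_poly_except01 => x x0 x1; rewrite !hornerZ rE // horner_hpoly_of -homogZ.
  rewrite -homog_reflect ?subr_eq0 //.
  by rewrite !mulN1r opprB [1 + _]addrC subrK.
have pD : p`_D != 0.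
  by rewrite -[D]/(D.+1.-1) -sp -lead_coefE lead_coef_eq0 -size_poly_eq0 sp.
have sD : s = (-1) ^+ D.
  have := congr1 (horner^~ 1) sr; rewrite /= !hornerZ rE ?oner_neq0 //.
  by rewrite horner_hpoly_of subrr homogr0 expr1n mulr1 => /(mulIf pD).
have rh : r = h by apply: (@scalerI _ _ ((-1) ^+ D)); rewrite ?signr_eq0 // sr sD.
by move=> i iD; rewrite -[in LHS]rh coef_poly ltnS iD.
Qed.

Section EulerCharacteristic.
Variable T : finType.
Implicit Types (G K : {set {set T}}) (x y z : {set T}).

Lemma set1_neq0 (v : T) : [set v] != set0.
Proof. by apply/set0Pn; exists v; rewrite set11. Qed.

Lemma complex_neq0 G y : is_complex G -> y \in G -> y != set0.
Proof. by case=> G0 _ yG; apply: contraNneq G0 => <-. Qed.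

Lemma in_Ustar G x y : (y \in Ustar G x) = (y \in G) && (x \subset y).
Proof. by rewrite inE. Qed.

Lemma in_Bstar G x y : is_complex G ->
  (y \in Bstar G x) = (y \in G) && (y :|: x \in G).
Proof.
move=> cG; have [_ Gc] := cG; rewrite inE; case yG: (y \in G) => //=.
apply/existsP/idP => [[w /andP[]]|yxG].
  rewrite in_Ustar => /andP[wG xw] yw; apply: (Gc _ _ wG); first by rewrite subUset yw.
  exact: subset_neq0 (subsetUl _ _) (complex_neq0 cG yG).
by exists (y :|: x); rewrite in_Ustar yxG subsetUr subsetUl.
Qed.

Lemma in_Sph G x y : is_complex G ->
  (y \in Sph G x) = [&& y \in G, y :|: x \in G & ~~ (x \subset y)].
Proof.
move=> cG; rewrite inE in_Bstar // in_Ustar.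
by case: (y \in G); case: (x \subset y); rewrite ?andbT ?andbF.
Qed.

Lemma complex_setD_Ustar G x : is_complex G -> is_complex (G :\: Ustar G x).
Proof.
case=> G0 Gc; split=> [|y w]; first by rewrite inE negb_and G0 orbT.
rewrite !inE => /andP[xNw wG] yw y0; rewrite (Gc _ _ wG yw y0) andbT.
by rewrite wG /= in xNw; apply: contra xNw => /subset_trans->.
Qed.

Lemma complex_Sph G x : is_complex G -> is_complex (Sph G x).
Proof.
move=> cG; have [G0 Gc] := cG; split=> [|y w]; first by rewrite in_Sph // (negbTE G0).
rewrite !in_Sph // => /and3P[wG wxG xNw] yw y0.
rewrite (Gc _ _ wG yw y0) (Gc _ _ wxG (setSU _ yw)) ?(subset_neq0 (subsetUl _ _) y0) //=.
by apply: contra xNw => /subset_trans->.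
Qed.

Lemma wG_setD G K : K \subset G -> wG G = wG (G :\: K) + wG K.
Proof. by move=> KG; rewrite /wG (big_setID K) addrC (setIidPr KG). Qed.

Lemma wt_setU1 a z : a \notin z -> z != set0 -> wt (a |: z) = - wt z.
Proof.
move=> aNz; rewrite -card_gt0 /wt cardsU1 aNz.
by case: #|z| => // n _; rewrite exprS mulN1r.
Qed.

Lemma big_faces_through (R : zmodType) K a (F : {set T} -> R) : [set a] \in K ->
  \sum_(y in K | a \in y) F y =
  F [set a] + \sum_(z | [&& z != set0, a \notin z & a |: z \in K]) F (a |: z).
Proof.
move=> aK; rewrite (bigD1 [set a]) ?aK ?set11 //=; congr (_ + _).
rewrite (reindex_onto (fun z => a |: z) (fun y => y :\ a)) /=; last first.
  by move=> y /andP[/andP[_ ay] _]; rewrite setD1K.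
apply: eq_bigl => z; rewrite setU11 andbT.
have [aNz|az] := boolP (a \notin z); last first.
  have -> : ((a |: z) :\ a == z) = false by apply: contraNF az => /eqP<-; rewrite setD11.
  by rewrite andbF /= andbF.
rewrite (setU1K aNz) eqxx andbT andbC /=; congr (_ && _); congr negb.
apply/eqP/eqP => [e|->]; last by rewrite setU0.
by rewrite -(setU1K aNz) e setDv.
Qed.

Lemma complex_Bstar G x : is_complex G -> is_complex (Bstar G x).
Proof.
move=> cG; have [G0 Gc] := cG; split=> [|y w]; first by rewrite in_Bstar // (negbTE G0).
rewrite !in_Bstar // => /andP[wG wxG] yw y0.
by rewrite (Gc _ _ wG yw y0) (Gc _ _ wxG (setSU _ yw)) ?(subset_neq0 (subsetUl _ _) y0).
Qed.

Lemma cone_wG K a : is_complex K -> [set a] \in K ->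
  (forall y, y \in K -> a |: y \in K) -> wG K = 1.
Proof.
move=> cK aK coneK; rewrite /wG (bigID (fun y => a \in y)) /= big_faces_through //.
have link z : [&& z != set0, a \notin z & a |: z \in K] = (z \in K) && (a \notin z).
  apply/and3P/andP => [[z0 aNz azK]|[zK aNz]].
    by case: cK => _ Kc; rewrite (Kc _ _ azK (subsetUr _ _) z0).
  by rewrite (complex_neq0 cK zK) aNz coneK.
rewrite (eq_bigl _ _ link) /wt cards1 expr0 -addrA -big_split /= big1 ?addr0 //.
by move=> z /andP[zK aNz]; rewrite -/(wt _) wt_setU1 ?addNr ?(complex_neq0 cK).
Qed.

Lemma wG_Bstar G x : is_complex G -> x \in G -> wG (Bstar G x) = 1.
Proof.
move=> cG xG; have [_ Gc] := cG.
have [a ax] := set0Pn _ (complex_neq0 cG xG).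
have a0 y : a |: y != set0 by apply/set0Pn; exists a; rewrite setU11.
apply: (cone_wG (a := a) (complex_Bstar x cG)).
  rewrite in_Bstar // (setUidPr _) ?sub1set // xG andbT.
  by apply: Gc xG _ (set1_neq0 a); rewrite sub1set.
move=> y; rewrite !in_Bstar // => /andP[yG yxG].
have e : (a |: y) :|: x = y :|: x.
  by rewrite -setUA (setUidPr _) // sub1set inE ax orbT.
by rewrite e yxG andbT; apply: Gc yxG _ (a0 y); rewrite -e subsetUl.
Qed.

Lemma wG_Ustar G x : is_complex G -> x \in G -> wG (Ustar G x) = 1 - wG (Sph G x).
Proof.
move=> cG xG; rewrite -(wG_Bstar cG xG) (@wG_setD (Bstar G x) (Ustar G x)).
  by rewrite /Sph addrC addKr.
apply/subsetP => y; rewrite in_Ustar in_Bstar // => /andP[yG xy].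
by rewrite yG (setUidPl xy).
Qed.

Lemma wG_setD_Ustar G x : is_complex G -> x \in G ->
  wG G = wG (G :\: Ustar G x) + 1 - wG (Sph G x).
Proof.
move=> cG xG; rewrite (@wG_setD G (Ustar G x)) ?wG_Ustar ?addrA //.
by apply/subsetP => y; rewrite in_Ustar => /andP[].
Qed.

Lemma contractible_wG G : contractible G -> is_complex G -> wG G = 1.
Proof.
elim=> [v|{}G x xG _ IHS _ IHD] cG; first by rewrite /wG big_set1 /wt cards1.
have cS := complex_Sph x cG; have cD := complex_setD_Ustar x cG.
by rewrite (wG_setD_Ustar cG xG) IHD // IHS // addrK.
Qed.

Lemma sphere_wG n K : is_complex K -> sphere_ n K -> wG K = 1 - (-1) ^+ n.
Proof.
elim: n K => [|n IH] K cK /=; first by move->; rewrite /wG big_set0 subrr.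
case=> sphS [x xK contrD].
have cS := complex_Sph x cK; have cD := complex_setD_Ustar x cK.
by rewrite (wG_setD_Ustar cK xK) contractible_wG // (IH _ cS (sphS _ xK)) exprS; ring.
Qed.

End EulerCharacteristic.

Section Dimension.
Variable T : finType.
Implicit Types (K : {set {set T}}).

Lemma fcount_gt_dimS K k : (dimS K < k)%N -> fcount K k = 0%N.
Proof.
rewrite /fcount; case: eqP => [->//|_] Dk; apply/eqP; rewrite cards_eq0.
apply/eqP/setP => y; rewrite !inE; apply/negbTE; rewrite negb_and.
case yK: (y \in K) => //=; rewrite neq_ltn; apply/orP; left.
apply: leq_ltn_trans Dk.
exact: (@leq_bigmax_cond _ (fun x => x \in K) (fun x => #|x|) y yK).
Qed.

Lemma fcount_dimS_neq0 K : fcount K (dimS K) != 0%N.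
Proof.
rewrite /fcount; case: ifP => // /negbT D0.
have [K0|] := eqVneq K set0; first by rewrite K0 /dimS big_set0 in D0.
rewrite -card_gt0 => cK.
have [y yK Dy] := @eq_bigmax_cond _ (fun x => x \in K) (fun x => #|x|) cK.
rewrite -lt0n card_gt0; apply/set0Pn; exists y.
by rewrite inE /dimS Dy eqxx andbT; exact: yK.
Qed.

End Dimension.

Definition fpoly (R : nzRingType) (T : finType) (K : {set {set T}}) : {poly R} :=
  1 + \sum_(y in K) 'X^#|y|.

Section FPolynomial.
Variables (R : numDomainType) (T : finType).
Implicit Types (K : {set {set T}}) (y z : {set T}).

Lemma fpoly_set0 : fpoly R (set0 : {set {set T}}) = 1.
Proof. by rewrite /fpoly big_set0 addr0. Qed.

Lemma horner_fpoly0 K : set0 \notin K -> (fpoly R K).[0] = 1.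
Proof.
move=> K0; rewrite hornerD hornerC horner_sum big1 ?addr0 // => y yK.
by rewrite hornerXn expr0n cards_eq0 (negbTE (memPn K0 _ yK)).
Qed.

Lemma horner_fpolyN1 K : set0 \notin K -> (fpoly R K).[-1] = 1 - (wG K)%:~R.
Proof.
move=> K0; rewrite hornerD hornerC horner_sum /wG rmorph_sum -sumrN.
congr (_ + _); apply: eq_bigr => y yK; rewrite hornerXn /wt.
rewrite -[#|y|]prednK ?card_gt0 ?(memPn K0 _ yK) //=.
by rewrite exprS mulN1r rmorphXn rmorphN1.
Qed.

Lemma coef_fpoly K k : set0 \notin K -> (fpoly R K)`_k = (fcount K k)%:R.
Proof.
move=> K0; rewrite coefD coefC coef_sum /fcount; case: k => [|k] /=.
  rewrite big1 ?addr0 // => y yK.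
  by rewrite coefXn eq_sym cards_eq0 (negbTE (memPn K0 _ yK)).
rewrite add0r -sumr_const big_mkcond [RHS]big_mkcond; apply: eq_bigr => y _.
by rewrite coefXn inE eq_sym; case: (y \in K); case: (_ == _).
Qed.

Lemma deriv_fpoly K : is_complex K ->
  (fpoly R K)^`() = \sum_(v | [set v] \in K) fpoly R (Sph K [set v]).
Proof.
move=> cK; have [K0 Kc] := cK.
have -> : \sum_(v | [set v] \in K) fpoly R (Sph K [set v]) =
          \sum_v \sum_(y in K | v \in y) 'X^(#|y|.-1) :> {poly R}.
  rewrite [RHS](bigID (fun v => [set v] \in K)) /=.
  rewrite [X in _ = _ + X]big1 ?addr0 => [|v vNK]; last first.
    apply: big1 => y /andP[yK vy]; case/negP: vNK.
    by apply: Kc yK _ (set1_neq0 v); rewrite sub1set.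
  apply: eq_bigr => v vK; rewrite big_faces_through // cards1 expr0; congr (_ + _).
  apply: eq_big => z; last first.
    by rewrite in_Sph // sub1set => /and3P[_ _ vNz]; rewrite cardsU1 vNz.
  rewrite in_Sph // sub1set setUC.
  apply/and3P/and3P => [[zK vzK vNz]|[z0 vNz vzK]]; split => //.
    exact: memPn K0 _ zK.
  exact: Kc vzK (subsetUr _ _) z0.
rewrite (exchange_big_dep (mem K)) /= => [|v y _ /andP[]//].
rewrite /fpoly derivD derivC add0r raddf_sum /=; apply: eq_bigr => y yK.
by rewrite derivXn (eq_bigl (mem y)) ?sumr_const // => v; rewrite yK.
Qed.

Lemma fpoly_reflect_of_links n K : is_complex K ->
  (forall v, [set v] \in K ->
     fpoly R (Sph K [set v]) \Po -('X + 1) = (-1) ^+ n *: fpoly R (Sph K [set v])) ->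
  wG K = 1 + (-1) ^+ n -> fpoly R K \Po -('X + 1) = (-1) ^+ n.+1 *: fpoly R K.
Proof.
move=> cK links wK; have [K0 _] := cK.
set g := fpoly R K \Po -('X + 1) - (-1) ^+ n.+1 *: fpoly R K.
have dg : g^`() = 0.
  rewrite derivB deriv_comp derivZ deriv_fpoly // derivN derivD derivX derivC addr0.
  rewrite raddf_sum /= (eq_bigr _ links) -scaler_sumr exprS.
  by rewrite mulrN1 mulN1r scaleNr opprK addNr.
have g0 : g.[0] = 0.
  rewrite hornerD hornerN hornerZ horner_comp.
  have -> : (- ('X + 1)).[0] = -1 :> R by rewrite !hornerE.
  rewrite horner_fpolyN1 // horner_fpoly0 // wK rmorphD rmorph1 rmorphXn rmorphN1 exprS.
  by ring.
by apply/eqP; rewrite -subr_eq0 -/g (deriv_eq0_polyC dg) -horner_coef0 g0.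
Qed.

Lemma fpoly_reflect n K : is_complex K -> manifold n K -> wG K = 1 + (-1) ^+ n ->
  fpoly R K \Po -('X + 1) = (-1) ^+ n.+1 *: fpoly R K.
Proof.
elim: n K => [|n IH] K cK mK wK; apply: fpoly_reflect_of_links => // v vK.
  by rewrite (mK _ vK) fpoly_set0 comp_polyC scale1r.
have [mS _] := mK _ vK; have cS := complex_Sph [set v] cK.
by apply: IH => //; rewrite (sphere_wG cS (mK _ vK)) exprS; ring.
Qed.

Lemma size_fpoly K : is_complex K -> size (fpoly R K) = (dimS K).+1.
Proof.
case=> K0 _; apply/eqP; rewrite eqn_leq; apply/andP; split.
  by apply/leq_sizeP => k; rewrite coef_fpoly // => /fcount_gt_dimS->.
rewrite ltnNge; apply/negP => /leq_sizeP/(_ _ (leqnn _)).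
by rewrite coef_fpoly //; apply/eqP; rewrite pnatr_eq0 fcount_dimS_neq0.
Qed.

Lemma map_hpoly K : set0 \notin K ->
  map_poly (intr : int -> R) (hpoly K) = hpoly_of (dimS K) (fpoly R K).
Proof.
move=> K0; rewrite rmorph_sum /=; apply: eq_bigr => k _.
by rewrite map_polyZ rmorphXn rmorphB /= map_polyX rmorph1 rmorph_nat coef_fpoly.
Qed.

End FPolynomial.

Unset Implicit Arguments.
Set Strict Implicit.

Theorem mainTheorem11 (T : finType) (G : {set {set T}}) (d : nat) :
  is_complex G -> manifold d G -> wG G = 1 + (-1) ^+ d ->
  dehn_sommerville G.
Proof.
move=> cG mG wGe i iD; have [G0 _] := cG.
have := hpoly_of_palindromic (size_fpoly rat cG) (fpoly_reflect rat cG mG wGe) iD.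
by rewrite -map_hpoly // !coef_map => /intr_inj.
Qed.
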